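(* If the toric algebra $A_{\mathscr{E}}$ is consistent, then every arrow of $Q$ lies on some anticanonical cycle, and hence appears in a term of the superpotential $W=\sum_{p\text{ anticanonical}}p$.
   Context: Let $\mathbb{k}$ be an algebraically closed field and $X=\operatorname{Spec}R$ a normal affine toric variety of dimension $n$ with a torus-fixed point, $R=\mathbb{k}[\sigma^\vee\cap M]$, $\sigma\subset N\otimes\mathbb{R}$ strongly convex rational polyhedral. Let $\sigma(1)$ be the rays, $d=|\sigma(1)|$, $v_\rho$ primitive generators, $D_\rho$ toric prime divisors, torus-invariant divisors identified with $\mathbb{Z}^d$, $\deg:\mathbb{Z}^d\to\operatorname{Cl}(X)$ the class map. Cox ring $\mathbb{k}[x_\rho]$, $x^D=\prod x_\rho^{D_\rho}$. Assume $X$ is Gorenstein: $(1,\dots,1)\in\mathbb{Z}^d$ lies in the image of $M$ under $u\mapsto\sum\langle u,v_\rho\rangle D_\rho$. Let $\mathscr{E}=(E_0=\mathcal{O}_X,E_1,\dots,E_r)$ be pairwise distinct rank one reflexive sheaves, $E_i=\mathcal{O}_X(D_i')$, and $Q$ its quiver of sections: vertices $0,\dots,r$; an arrow $a:i\to j$ with label $\operatorname{div}(a)\in\mathbb{N}^d$ for each irreducible $T_M$-invariant section $x^{\operatorname{div}(a)}$ of $\operatorname{Hom}(E_i,E_j)\cong H^0(\mathcal{O}_X(D_j'-D_i'))$ (irreducible: not in the image of multiplication through any $E_k$, $k\neq i,j$). Paths compose right to left; $\operatorname{div}(p)$ is the sum of labels of arrows of $p$. $J_{\mathscr{E}}$ is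 generated by $p^+-p^-$ over pairs of paths with equal head, tail and label; $A_{\mathscr{E}}=\mathbb{k}Q/J_{\mathscr{E}}$. A cycle $p$ is anticanonical if $x^{\operatorname{div}(p)}=\prod_\rho x_\rho$; $W\in\mathbb{k}Q/[\mathbb{k}Q,\mathbb{k}Q]$ is the sum of all anticanonical cycles. For a path $q$, $\partial_qW$ is the sum of all paths $p$ such that $pq$ is an anticanonical cycle. $\mathscr{P}$ is the set of paths $q$ with $\partial_qW$ a sum of precisely two paths sharing neither initial nor final arrow; $J_W$ is generated by $p^+-p^-$ whenever $\partial_qW=p^++p^-$, $q\in\mathscr{P}$. $A_{\mathscr{E}}$ is consistent if $J_W=J_{\mathscr{E}}$. *)

From HB Require Import structures.
From mathcomp Require Import all_boot all_order all_algebra.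
From Stdlib Require List.
Set Implicit Arguments. Unset Strict Implicit. Unset Printing Implicit Defensive.
Import Order.TTheory GRing.Theory Num.Theory.

Section LabelledQuiver.
Variables (V A : eqType) (isArrow : A -> Prop) (tl hd : A -> V) (d : nat)
          (lab : A -> {ffun 'I_d -> nat}).

(* A path is a tail vertex together with its arrows listed in the order in
   which they are traversed (the first one leaves the tail). *)
Definition qpath := (V * seq A)%type.

Fixpoint chain (t : V) (s : seq A) : bool :=
  if s is a :: s' then (tl a == t) && chain (hd a) s' else true.

Definition ptail (p : qpath) : V := p.1.
Definition phead (p : qpath) : V := last p.1 (map hd p.2).
Definition pvalid (p : qpath) : Prop :=
  (forall a, a \in p.2 -> isArrow a) /\ chain p.1 p.2.

(* composition p q : first q, then p  (paths compose right to left) *)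
Definition pcomp (p q : qpath) : qpath := (q.1, q.2 ++ p.2).

Definition plab (p : qpath) (rho : 'I_d) : nat := \sum_(a <- p.2) lab a rho.

(* anticanonical cycle: nontrivial closed path with x^{div p} = prod x_rho *)
Definition anticanonical (c : qpath) : Prop :=
  pvalid c /\ c.2 <> [::] /\ phead c = ptail c /\ forall rho, plab c rho = 1%N.

(* p occurs in d_q W : p q is an anticanonical cycle *)
Definition in_dW (q p : qpath) : Prop :=
  pvalid q /\ pvalid p /\ ptail p = phead q /\ anticanonical (pcomp p q).

Definition share_first (p1 p2 : qpath) : Prop :=
  exists a, ohead p1.2 = Some a /\ ohead p2.2 = Some a.
Definition share_last (p1 p2 : qpath) : Prop :=
  exists a, ohead (rev p1.2) = Some a /\ ohead (rev p2.2) = Some a.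

(* q \in P with d_q W = p1 + p2 *)
Definition dW_two (q p1 p2 : qpath) : Prop :=
  p1 <> p2 /\ (forall p, in_dW q p <-> p = p1 \/ p = p2) /\
  ~ share_first p1 p2 /\ ~ share_last p1 p2.

Definition relW (p1 p2 : qpath) : Prop := exists q, dW_two q p1 p2.
Definition relE (p1 p2 : qpath) : Prop :=
  pvalid p1 /\ pvalid p2 /\ ptail p1 = ptail p2 /\ phead p1 = phead p2 /\
  forall rho, plab p1 rho = plab p2 rho.

Variable k : fieldType.

(* elements of kQ are coefficient functions on paths; the two-sided ideal
   generated by binomials p1 - p2 (with B p1 p2) is the k-span of the
   elements u p1 w - u p2 w with u, w paths composable with p1 (and p2). *)
Record gen := Gen { gc : k; gu : qpath; gp1 : qpath; gp2 : qpath; gw : qpath }.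

Definition gen_ok (B : qpath -> qpath -> Prop) (g : gen) : Prop :=
  B (gp1 g) (gp2 g) /\ pvalid (gu g) /\ pvalid (gw g) /\
  phead (gw g) = ptail (gp1 g) /\ phead (gp1 g) = ptail (gu g).

Definition gen_coef (L : seq gen) (x : qpath) : k :=
  \sum_(g <- L)
    ((if pcomp (gu g) (pcomp (gp1 g) (gw g)) == x then gc g else 0) -
     (if pcomp (gu g) (pcomp (gp2 g) (gw g)) == x then gc g else 0))%R.

Definition in_ideal (B : qpath -> qpath -> Prop) (f : qpath -> k) : Prop :=
  exists L : seq gen, List.Forall (gen_ok B) L /\ forall x, f x = gen_coef L x.

Definition consistent : Prop :=
  forall f : qpath -> k, in_ideal relW f <-> in_ideal relE f.

End LabelledQuiver.

Section Toric.
Local Open Scope ring_scope.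
Variables (n d : nat) (v : 'I_d -> 'I_n -> int).

Definition pairing (u : 'I_n -> int) (rho : 'I_d) : int :=
  (\sum_(i < n) u i * v rho i)%R.

(* D is the divisor of a character u in M, i.e. deg D = 0 in Cl(X) *)
Definition principal (D : 'I_d -> int) : Prop :=
  exists u : 'I_n -> int, forall rho, D rho = pairing u rho.

Definition primitive_rays : Prop :=
  forall (rho : 'I_d) (m : nat), (forall i, (m%:Z %| v rho i)%Z) -> m = 1%N.

Definition strongly_convex : Prop :=
  forall lam : 'I_d -> rat, (forall rho, 0 <= lam rho)%R ->
    (forall i, \sum_(rho < d) lam rho * (v rho i)%:~R = 0)%R ->
    forall rho, lam rho = 0%R.

(* each v_rho spans an extremal ray, i.e. sigma(1) = {rays of v_rho} *)
Definition rays_extremal : Prop :=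
  forall rho : 'I_d, ~ exists lam : 'I_d -> rat,
    (forall r, 0 <= lam r)%R /\
    forall i, (v rho i)%:~R = (\sum_(r < d | r != rho) lam r * (v r i)%:~R)%R.

Definition full_dimensional : Prop :=
  forall u : 'I_n -> rat,
    (forall rho, \sum_(i < n) u i * (v rho i)%:~R = 0)%R -> forall i, u i = 0%R.

Definition gorenstein : Prop :=
  exists u : 'I_n -> int, forall rho, pairing u rho = 1%R.

Definition cone_data : Prop :=
  [/\ primitive_rays, strongly_convex, rays_extremal & full_dimensional].

(* the collection E_i = O_X(D'_i), i = 0..r *)
Variables (r : nat) (D' : 'I_r.+1 -> 'I_d -> int).

Definition collection_ok : Prop :=
  principal (D' ord0) /\
  forall i j : 'I_r.+1, i <> j -> ~ principal (fun rho => D' j rho - D' i rho)%R.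

Definition qs_arrow := ('I_r.+1 * 'I_r.+1 * {ffun 'I_d -> nat})%type.
Definition qs_tl (a : qs_arrow) : 'I_r.+1 := a.1.1.
Definition qs_hd (a : qs_arrow) : 'I_r.+1 := a.1.2.
Definition qs_lab (a : qs_arrow) : {ffun 'I_d -> nat} := a.2.

(* x^a is a T_M-invariant section of Hom(E_i,E_j) = H^0(O(D'_j - D'_i)) *)
Definition is_section (i j : 'I_r.+1) (a : 'I_d -> nat) : Prop :=
  principal (fun rho => (a rho)%:Z - (D' j rho - D' i rho))%R.

Definition is_qs_arrow (a : qs_arrow) : Prop :=
  let: (i, j, l) := a in
  is_section i j l /\ l <> [ffun _ => 0%N] /\
  ~ exists (m : 'I_r.+1) (b c : 'I_d -> nat),
      [/\ m <> i, m <> j, is_section i m b, is_section m j c &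
          forall rho, l rho = (b rho + c rho)%N].

End Toric.

From Pilot Require Import Defs.
From HB Require Import structures.
From mathcomp Require Import all_boot all_order all_algebra.
From mathcomp Require Import zify.
From Stdlib Require Import Classical.
Set Implicit Arguments. Unset Strict Implicit. Unset Printing Implicit Defensive.
Import GRing.Theory.

(* Let [a : i -> j] be an arrow with label [l] and let [t] be the total degree
   of [l].  Because X is Gorenstein, [x^l] times some section of Hom(E_j, E_i)
   equals [(prod_rho x_rho)^t]; as every section is the label of a path, [a]
   followed by a path back to [i] and the [t]-th power of an anticanonical
   cycle [c] at [i] have the same label, so their difference lies in J_E.
   If [a] were on no anticanonical cycle, each generator of J_W would be a
   difference of two paths that both contain [a] or both avoid it, hence the
   functional summing the coefficients of the paths avoiding [a] would vanish
   on J_W but not on that binomial, since [c^t] avoids [a]. *)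

Section LabelledQuiver.
Variables (V A : eqType) (isArrow : A -> Prop) (tl hd : A -> V) (d : nat)
          (lab : A -> {ffun 'I_d -> nat}).

Local Notation path := (qpath V A).
Local Notation pvalid := (pvalid isArrow tl hd).
Local Notation phead := (phead hd).
Local Notation plab := (plab lab).
Local Notation anticanonical := (anticanonical isArrow tl hd lab).

Lemma chain_cat t s1 s2 :
  chain tl hd t (s1 ++ s2) = chain tl hd t s1 && chain tl hd (last t (map hd s1)) s2.
Proof. by elim: s1 t => [|a s IH] t //=; rewrite IH andbA. Qed.

Lemma pvalid_pcomp (p q : path) :
  pvalid p -> pvalid q -> phead q = ptail p -> pvalid (Defs.pcomp p q).
Proof.
case: p q => [tp sp] [tq sq] [Ap Cp] [Aq Cq]; rewrite /Defs.phead /ptail /= => Eqp.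
split=> [a|] /=; last by rewrite chain_cat Cq Eqp.
by rewrite mem_cat => /orP[]; [apply: Aq | apply: Ap].
Qed.

Lemma phead_pcomp (p q : path) : phead q = ptail p -> phead (Defs.pcomp p q) = phead p.
Proof. by case: p q => [tp sp] [tq sq]; rewrite /Defs.phead /= map_cat last_cat => ->. Qed.

Lemma plab_pcomp (p q : path) rho : plab (Defs.pcomp p q) rho = plab q rho + plab p rho.
Proof. by rewrite /Defs.plab big_cat. Qed.

Definition pnil (t : V) : path := (t, [::]).

Lemma pcomp_pnil (p : path) :
  Defs.pcomp (pnil (phead p)) (Defs.pcomp p (pnil (ptail p))) = p.
Proof. by case: p => t s; rewrite /Defs.pcomp /= cats0. Qed.

Definition parrow (a : A) : path := (tl a, [:: a]).

Lemma pvalid_parrow a : isArrow a -> pvalid (parrow a).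
Proof. by move=> Ha; split=> [b|] /=; rewrite ?inE ?eqxx // => /eqP->. Qed.

Lemma plab_parrow a rho : plab (parrow a) rho = lab a rho.
Proof. by rewrite /Defs.plab big_seq1. Qed.

Definition ppow (c : path) (t : nat) : path := iter t (Defs.pcomp c) (pnil (ptail c)).

Lemma ptail_ppow c t : ptail (ppow c t) = ptail c.
Proof. by elim: t. Qed.

Lemma ppow_cycle c t :
  pvalid c -> phead c = ptail c -> pvalid (ppow c t) /\ phead (ppow c t) = ptail c.
Proof.
move=> Vc Hc; elim: t => [|t [Vt Ht]] //=.
by split; [apply: pvalid_pcomp | rewrite phead_pcomp].
Qed.

Lemma plab_ppow c t rho : plab (ppow c t) rho = t * plab c rho.
Proof.
elim: t => [|t IH] /=; first by rewrite /Defs.plab big_nil.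
by rewrite plab_pcomp IH mulSn addnC.
Qed.

Lemma mem_ppow c t a : a \in (ppow c t).2 -> a \in c.2.
Proof. by elim: t => [|t IH] //=; rewrite mem_cat => /orP[/IH|]. Qed.

Section AvoidingFunctional.
Variable k : fieldType.
Local Open Scope ring_scope.
Local Notation gen := (gen V A k).

Definition gen_lhs (g : gen) : path := Defs.pcomp (gu g) (Defs.pcomp (gp1 g) (gw g)).
Definition gen_rhs (g : gen) : path := Defs.pcomp (gu g) (Defs.pcomp (gp2 g) (gw g)).
Definition gen_paths (L : seq gen) : seq path :=
  flatten [seq [:: gen_lhs g; gen_rhs g] | g <- L].

Definition gen_pairing (w : path -> k) (L : seq gen) : k :=
  \sum_(g <- L) gc g * (w (gen_lhs g) - w (gen_rhs g)).

Lemma sum_gen_coef w L (X : seq path) : uniq X -> {subset gen_paths L <= X} ->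
  \sum_(x <- X) gen_coef L x * w x = gen_pairing w L.
Proof.
move=> uX; elim: L => [|g L IH] sLX.
  by rewrite /gen_pairing big_nil big1 // => x _; rewrite /gen_coef big_nil mul0r.
have [lhsX rhsX] : gen_lhs g \in X /\ gen_rhs g \in X.
  by split; apply: sLX; rewrite !inE eqxx ?orbT.
have sum_at y : y \in X -> \sum_(x <- X) (if y == x then gc g else 0) * w x = gc g * w y.
  move=> yX; rewrite (bigD1_seq y) //= eqxx big1 ?addr0 // => x.
  by rewrite eq_sym => /negbTE->; rewrite mul0r.
rewrite /gen_pairing big_cons -/(gen_pairing w L) -IH => [|x Lx].
  by under eq_bigr => x _ do rewrite /gen_coef big_cons mulrDl mulrBl;
     rewrite big_split sumrB /= !sum_at // mulrBr.
by apply: sLX; rewrite !inE Lx !orbT.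
Qed.

Lemma gen_pairing_coef w L L' :
  gen_coef L =1 gen_coef L' -> gen_pairing w L = gen_pairing w L'.
Proof.
move=> eqLL'; pose X := undup (gen_paths L ++ gen_paths L').
have [sL sL'] : {subset gen_paths L <= X} /\ {subset gen_paths L' <= X}.
  by split=> x xL; rewrite mem_undup mem_cat xL ?orbT.
rewrite -(sum_gen_coef _ (undup_uniq _) sL) -(sum_gen_coef _ (undup_uniq _) sL').
by apply: eq_bigr => x _; rewrite eqLL'.
Qed.

Lemma gen_pairing_eq0 (P : gen -> Prop) w L :
  (forall g, P g -> w (gen_lhs g) = w (gen_rhs g)) -> List.Forall P L ->
  gen_pairing w L = 0.
Proof.
move=> wP; elim=> [|g {}L Pg _ IH]; first by rewrite /gen_pairing big_nil.
by rewrite /gen_pairing big_cons -/(gen_pairing w L) IH wP // subrr mulr0 addr0.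
Qed.

Definition avoids (a : A) (x : path) : k := (a \notin x.2)%:R.

Lemma relW_avoids a p1 p2 : (forall c, anticanonical c -> a \notin c.2) ->
  relW isArrow tl hd lab p1 p2 -> a \notin p1.2 /\ a \notin p2.2.
Proof.
move=> noc [q [_ [dWq _]]].
have notin p : p = p1 \/ p = p2 -> a \notin p.2.
  by move/dWq => [_ [_ [_ /noc]]]; rewrite mem_cat negb_or => /andP[].
by split; apply: notin; [left | right].
Qed.

Lemma gen_pairing_avoids_relW a L : (forall c, anticanonical c -> a \notin c.2) ->
  List.Forall (gen_ok isArrow tl hd (relW isArrow tl hd lab)) L ->
  gen_pairing (avoids a) L = 0.
Proof.
move=> noc; apply: gen_pairing_eq0 => g [/(relW_avoids noc)[a1 a2] _].
by rewrite /avoids /gen_lhs /gen_rhs /= !mem_cat (negbTE a1) (negbTE a2).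
Qed.

Lemma consistent_separating_arrow a p1 p2 :
  consistent isArrow tl hd lab k -> relE isArrow tl hd lab p1 p2 ->
  a \in p1.2 -> a \notin p2.2 -> exists c, anticanonical c /\ a \in c.2.
Proof.
move=> cons E12 a1 a2; apply: NNPP => noc.
have {}noc c : anticanonical c -> a \notin c.2.
  by move=> Ac; apply/negP => ac; apply: noc; exists c.
pose g : gen := Gen 1 (pnil (phead p1)) p1 p2 (pnil (ptail p1)).
have [_ [_ [T12 [H12 _]]]] := E12.
have gE : in_ideal isArrow tl hd (relE isArrow tl hd lab) (gen_coef [:: g]).
  by exists [:: g]; split=> //; constructor=> //; rewrite /gen_ok /= -H12.
have [L [LW eqL]] := (cons _).2 gE.
have := gen_pairing_coef (avoids a) eqL.
rewrite [in RHS]gen_pairing_avoids_relW // /gen_pairing big_seq1 /gen_lhs /gen_rhs /=.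
rewrite pcomp_pnil H12 T12 pcomp_pnil /avoids a1 a2 /= mul1r sub0r.
by move/eqP; rewrite oppr_eq0 oner_eq0.
Qed.

End AvoidingFunctional.

End LabelledQuiver.
Arguments pnil {V A} t.

Section QuiverOfSections.
Variables (n d : nat) (v : 'I_d -> 'I_n -> int) (r : nat) (D' : 'I_r.+1 -> 'I_d -> int).

Local Notation isA := (@is_qs_arrow n d v r D').
Local Notation tlA := (@qs_tl d r).
Local Notation hdA := (@qs_hd d r).
Local Notation labA := (@qs_lab d r).
Local Notation pvalid := (pvalid isA tlA hdA).
Local Notation phead := (phead hdA).
Local Notation plab := (plab labA).
Local Notation anticanonical := (anticanonical isA tlA hdA labA).
Local Notation section := (is_section v D').

Lemma pairingZ (c : int) (u : 'I_n -> int) rho :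
  pairing v (fun k => c * u k)%R rho = (c * pairing v u rho)%R.
Proof. by rewrite /pairing mulr_sumr; apply: eq_bigr => k _; rewrite mulrA. Qed.

Lemma pairingB (u u' : 'I_n -> int) rho :
  pairing v (fun k => u k - u' k)%R rho = (pairing v u rho - pairing v u' rho)%R.
Proof. by rewrite /pairing -sumrB; apply: eq_bigr => k _; rewrite mulrBl. Qed.

Lemma qs_arrow_dim_gt0 a : isA a -> 0 < d.
Proof.
case: a => [[i j] l] [_ [l0 _]]; rewrite ltnNge; apply/negP => d0.
by apply: l0; apply/ffunP => rho; have := ltn_ord rho; rewrite ltnNge (leq_trans d0).
Qed.

Hypothesis collectionD' : collection_ok v D'.

Lemma section_zero_eq i j (D : 'I_d -> nat) :
  (forall rho, D rho = 0) -> section i j D -> i = j.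
Proof.
case: collectionD' => _ distinctD' D0 [u Hu]; apply: NNPP => /nesym ji.
by apply: (distinctD' j i ji); exists u => rho; rewrite -Hu D0 sub0r opprB.
Qed.

Lemma section_deg_gt0 i j (D : 'I_d -> nat) :
  i <> j -> section i j D -> 0 < \sum_rho D rho.
Proof.
move=> ij sD; rewrite lt0n sum_nat_eq0; apply/negP => /forallP D0.
by apply: ij; apply: section_zero_eq sD => rho; apply/eqP/D0.
Qed.

Lemma section_arrow_or_factor i j (D : 'I_d -> nat) :
  section i j D -> 0 < \sum_rho D rho ->
  isA (i, j, [ffun rho => D rho]) \/
  exists m b c, [/\ m <> i, m <> j, section i m b, section m j c &
                    forall rho, D rho = b rho + c rho].
Proof.
move=> sD Dpos; case: (classic (isA (i, j, [ffun rho => D rho]))) => [|notA].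
  by left.
right; apply: NNPP => nofactor; apply: notA; split; [|split].
- by case: sD => u Hu; exists u => rho; rewrite ffunE.
- move=> D0; move: Dpos; rewrite lt0n sum_nat_eq0 => /forallP[] rho.
  by move/ffunP/(_ rho): D0; rewrite !ffunE => ->.
- move=> [m [b [c [mi mj sb sc Dbc]]]]; apply: nofactor; exists m, b, c.
  by split=> // rho; rewrite -Dbc ffunE.
Qed.

Lemma section_path i j (D : 'I_d -> nat) : section i j D ->
  exists p, [/\ pvalid p, ptail p = i, phead p = j & forall rho, plab p rho = D rho].
Proof.
have [N] := ubnP (\sum_rho D rho); elim: N => // N IH in i j D * => ltDN sD.
have [/eqP|Dpos] := posnP (\sum_rho D rho).
  rewrite sum_nat_eq0 => /forallP D0; have {}D0 rho : D rho = 0 by apply/eqP/D0.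
  rewrite -(section_zero_eq D0 sD); exists (pnil i); split=> // rho.
  by rewrite /Defs.plab big_nil D0.
case: (section_arrow_or_factor sD Dpos) => [Aa | [m [b [c [mi mj sb sc Dbc]]]]].
  exists (parrow tlA (i, j, [ffun rho => D rho])).
  split=> //; first exact: pvalid_parrow.
  by move=> rho; rewrite plab_parrow ffunE.
have sumD : \sum_rho D rho = \sum_rho b rho + \sum_rho c rho.
  by rewrite -big_split; apply: eq_bigr.
have bpos := section_deg_gt0 (nesym mi) sb; have cpos := section_deg_gt0 mj sc.
have [pb [Vb Tb Hb Lb]] := IH i m b ltac:(lia) sb.
have [pc [Vc Tc Hc Lc]] := IH m j c ltac:(lia) sc.
exists (Defs.pcomp pc pb); split=> //.
- by apply: pvalid_pcomp; rewrite ?Hb ?Tc.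
- by rewrite phead_pcomp // Hb Tc.
- by move=> rho; rewrite plab_pcomp Lb Lc Dbc.
Qed.

Hypothesis gorensteinv : gorenstein v.

Lemma section_const i t : section i i (fun _ => t).
Proof.
case: gorensteinv => u Hu; exists (fun k => t%:Z * u k)%R => rho.
by rewrite pairingZ Hu subrr subr0 mulr1.
Qed.

Lemma section_complement i j (l : 'I_d -> nat) t :
  (forall rho, l rho <= t) -> section i j l -> section j i (fun rho => t - l rho).
Proof.
move=> le_t [u Hu]; case: gorensteinv => u0 Hu0.
exists (fun k => t%:Z * u0 k - u k)%R => rho.
rewrite pairingB pairingZ Hu0 -Hu; have := le_t rho; lia.
Qed.

Lemma anticanonical_cycle_at i : 0 < d -> exists c, anticanonical c /\ ptail c = i.
Proof.
move=> d_gt0; have [c [Vc Tc Hc Lc]] := section_path (section_const i 1).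
exists c; split=> //; split=> //; split; last by split; [rewrite Hc Tc|].
by move=> c0; have := Lc (Ordinal d_gt0); rewrite /Defs.plab c0 big_nil.
Qed.

Lemma arrow_cycle_binomial a c : isA a -> anticanonical c -> ptail c = tlA a ->
  exists2 p, a \in p.2 &
    relE isA tlA hdA labA p (ppow c (\sum_rho labA a rho)).
Proof.
case: a => [[i j] l] Aa [Vc [_ [Hc Lc]]] /= Tc; set t := \sum_rho l rho.
have le_t rho : l rho <= t by rewrite /t (bigD1 rho) //= leq_addr.
have [p [Vp Tp Hp Lp]] := section_path (section_complement le_t Aa.1).
exists (Defs.pcomp p (parrow tlA (i, j, l))); first exact: mem_head.
have [Vpow Hpow] := ppow_cycle t Vc Hc.
split; [|split=> //; split; [|split]].
- by apply: pvalid_pcomp; rewrite ?Tp //; apply: pvalid_parrow.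
- by rewrite ptail_ppow Tc.
- by rewrite phead_pcomp ?Tp // Hp Hpow Tc.
- by move=> rho; rewrite plab_pcomp plab_parrow Lp plab_ppow Lc muln1 subnKC.
Qed.

End QuiverOfSections.

Theorem corollary3p7 (kk : closedFieldType) (n d : nat)
  (v : 'I_d -> 'I_n -> int) (r : nat) (D' : 'I_r.+1 -> 'I_d -> int) :
  cone_data v -> gorenstein v -> collection_ok v D' ->
  consistent (@is_qs_arrow n d v r D') (@qs_tl d r) (@qs_hd d r)
    (@qs_lab d r) kk ->
  forall a : qs_arrow d r, is_qs_arrow v D' a ->
    exists c, anticanonical (@is_qs_arrow n d v r D') (@qs_tl d r)
                (@qs_hd d r) (@qs_lab d r) c /\ a \in c.2.
Proof.
move=> _ gor col cons a Aa.
have [c [Ac Tc]] := anticanonical_cycle_at col gor (qs_tl a) (qs_arrow_dim_gt0 Aa).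
have [ac | nac] := boolP (a \in c.2); first by exists c.
have [p ap Ep] := arrow_cycle_binomial col gor Aa Ac Tc.
apply: consistent_separating_arrow cons Ep ap _.
by apply: contra nac; apply: mem_ppow.
Qed.
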